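(* Let $(G,u,v,\alpha,\beta)$ be a Guvab with $\lim_{k\to\infty}W_k=1$ and $\beta<1$. Then $\rho(G,u,v,\alpha,\beta)\ge\frac{d(u,v)}{2}-1$.
   Context: A Guvab is a tuple $(G,u,v,\alpha,\beta)$ where $G$ is a finite, connected, simple graph, $u,v\in V(G)$, and $\alpha,\beta\in[0,1]$ with $\alpha\le\beta$. A random walk on $G$ with starting vertex $w$ and laziness $\gamma$ is the Markov chain $R_0=w$ and, for $i\ge1$, $R_i=R_{i-1}$ with probability $\gamma$ and $R_i=t$ with probability $\frac{1-\gamma}{\deg(R_{i-1})}$ for each neighbor $t$ of $R_{i-1}$. $\mu_k$ is the distribution after $k$ steps of the walk from $u$ with laziness $\alpha$, $\nu_k$ that of the walk from $v$ with laziness $\beta$, and $W_k=W(\mu_k,\nu_k)$ is the Wasserstein ($L^1$ optimal transport) distance with respect to the graph distance $d$: the minimum over transportation plans (nonnegative $T$ on $V(G)\times V(G)$ with marginals $\mu_k,\nu_k$) of $\sum d(w_1,w_2)T(w_1,w_2)$. For a Guvab with $W_k\to1$, $\rho=\inf\{N\in\mathbb{Z}: W_k=1\text{ for all }k\ge N\}$. *)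

From HB Require Import structures.
From mathcomp Require Import all_boot all_order all_algebra.
From mathcomp Require Import all_classical all_reals all_analysis.
Set Implicit Arguments. Unset Strict Implicit. Unset Printing Implicit Defensive.
Import Order.TTheory GRing.Theory Num.Theory.
Local Open Scope ring_scope.

Section Guvab.
Variable T : finType.
Variable e : rel T.

Definition simple_graph : Prop := irreflexive e /\ symmetric e.
Definition connected_graph : Prop := forall x y : T, connect e x y.

(* graph distance: least n such that there is an e-path of n steps from x to y
   (for a connected graph, d(x,y) < #|T|, so the search over iota 0 #|T| is exact) *)
Definition gdist (x y : T) : nat :=
  find (fun n => [exists p : n.-tuple T, path e x p && (last x p == y)])
       (iota 0 #|T|).

Definition deg (x : T) : nat := #|[set y | e x y]|.

Variable R : realType.

Definition trans (g : R) (x y : T) : R :=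
  if x == y then g else if e x y then (1 - g) / (deg x)%:R else 0.

Fixpoint walk_dist (w : T) (g : R) (k : nat) : T -> R :=
  match k with
  | 0 => fun y => (y == w)%:R
  | k'.+1 => fun y => \sum_(x : T) walk_dist w g k' x * trans g x y
  end.

Definition is_plan (mu nu : T -> R) (pi : T -> T -> R) : Prop :=
  [/\ forall a b, 0 <= pi a b,
      forall a, \sum_(b : T) pi a b = mu a &
      forall b, \sum_(a : T) pi a b = nu b].

Definition plan_cost (pi : T -> T -> R) : R :=
  \sum_(a : T) \sum_(b : T) (gdist a b)%:R * pi a b.

(* L^1 Wasserstein distance: the minimum (= infimum, which is attained)
   of the transport cost over all transportation plans *)
Definition wasserstein (mu nu : T -> R) : R :=
  inf [set c | exists pi, is_plan mu nu pi /\ c = plan_cost pi].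

Definition W (u v : T) (alpha beta : R) (k : nat) : R :=
  wasserstein (walk_dist u alpha k) (walk_dist v beta k).

End Guvab.

From HB Require Import structures.
From mathcomp Require Import all_boot all_order all_algebra.
From mathcomp Require Import all_classical all_reals all_analysis.
From mathcomp Require Import lra.
Set Implicit Arguments. Unset Strict Implicit. Unset Printing Implicit Defensive.
Import Order.TTheory GRing.Theory Num.Theory.
Import numFieldNormedType.Exports.
Local Open Scope ring_scope.
Local Open Scope classical_set_scope.

(* After k steps each walk is supported on the ball of radius k around its
   starting vertex, so any transportation plan between mu_k and nu_k only
   moves mass between vertices at distance at least d(u,v) - 2k, whence
   W_k >= d(u,v) - 2k.  If W_k = 1 for k >= N, taking k = N gives
   d(u,v) <= 2N + 1. *)

Section GraphDistance.
Variables (T : finType) (e : rel T).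

Definition reachable_in (n : nat) (x y : T) : Prop :=
  exists p : seq T, [/\ size p = n, path e x p & last x p = y].

Lemma reachable_in0 x : reachable_in 0 x x.
Proof. by exists [::]. Qed.

Lemma reachable_in_rcons n x y z :
  reachable_in n x y -> e y z -> reachable_in n.+1 x z.
Proof.
case=> p [sz pth lst] eyz; exists (rcons p z).
by rewrite size_rcons rcons_path last_rcons sz pth lst eyz.
Qed.

Lemma reachable_in_cat m n x y z :
  reachable_in m x y -> reachable_in n y z -> reachable_in (m + n) x z.
Proof.
case=> p [sp hp lp] [q [sq hq lq]]; exists (p ++ q).
by rewrite size_cat cat_path last_cat sp sq hp lp hq lq.
Qed.

Lemma reachable_in_sym n x y :
  symmetric e -> reachable_in n x y -> reachable_in n y x.
Proof.
move=> sym_e; elim: n x y => [|n IH] x y [[|z p] [//= sz pth lst]].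
  by rewrite -lst; apply: reachable_in0.
case/andP: pth => exz pth; apply: (@reachable_in_rcons n y z x); last by rewrite sym_e.
by apply: IH; exists p; split=> //; case: sz.
Qed.

Lemma gdist_le_reachable n x y : reachable_in n x y -> (gdist e x y <= n)%N.
Proof.
case=> p [sz pth lst]; rewrite /gdist.
have [n_small|] := ltnP n #|T|; last first.
  by apply: leq_trans; rewrite -[X in (_ <= X)%N](size_iota 0) find_size.
have reach_n : [exists t : n.-tuple T, path e x t && (last x t == y)].
  have sz' : size p == n by rewrite sz.
  by apply/existsP; exists (Tuple sz'); rewrite /= pth lst eqxx.
by rewrite leqNgt; apply/negP => /(before_find 0%N); rewrite nth_iota // add0n reach_n.
Qed.

Lemma gdist_refl x : gdist e x x = 0%N.
Proof. by apply/eqP; rewrite -leqn0 gdist_le_reachable //; apply: reachable_in0. Qed.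

Hypothesis conn_e : connected_graph e.

Lemma reachable_in_gdist x y : reachable_in (gdist e x y) x y.
Proof.
have /connectP [p pth ->] := conn_e x y.
case: (shortenP pth) => q pthq uniqq _.
have size_q : (size q < #|T|)%N.
  by have := max_card (mem (x :: q)); rewrite (card_uniqP uniqq).
rewrite /gdist; set P := (fun n : nat => _).
have hasP : has P (iota 0 #|T|).
  apply/hasP; exists (size q); first by rewrite mem_iota.
  apply/existsP; have szq : size q == size q by [].
  by exists (Tuple szq); rewrite /= pthq eqxx.
have := nth_find 0%N hasP.
rewrite nth_iota ?add0n; last by move: hasP; rewrite has_find size_iota.
by case/existsP=> t /andP [pth_t /eqP lst_t]; exists (val t); rewrite size_tuple.
Qed.

Lemma gdist_triangle x y z : (gdist e x z <= gdist e x y + gdist e y z)%N.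
Proof.
exact/gdist_le_reachable/reachable_in_cat/reachable_in_gdist/reachable_in_gdist.
Qed.

Lemma gdist_sym x y : symmetric e -> gdist e x y = gdist e y x.
Proof.
by move=> sym_e; apply/eqP; rewrite eqn_leq !gdist_le_reachable //;
  apply/reachable_in_sym/reachable_in_gdist.
Qed.

Lemma deg_gt0 x y : x != y -> (0 < deg e x)%N.
Proof.
move=> neq_xy; have /connectP [[|z p] /= pth lst] := conn_e x y.
  by rewrite lst eqxx in neq_xy.
by move: pth => /andP[exz _]; rewrite /deg card_gt0; apply/set0Pn; exists z; rewrite inE.
Qed.

End GraphDistance.

Section LazyWalk.
Variables (T : finType) (e : rel T) (R : realType).

Lemma trans_ge0 (g : R) x y : 0 <= g <= 1 -> 0 <= trans e g x y.
Proof.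
case/andP=> g_ge0 g_le1; rewrite /trans.
by case: eqP => // _; case: ifP => // _; rewrite divr_ge0 ?subr_ge0.
Qed.

Lemma walk_dist_ge0 w (g : R) k y : 0 <= g <= 1 -> 0 <= walk_dist e w g k y.
Proof.
move=> g01; elim: k y => [|k IH] y /=; first exact: ler0n.
by apply: sumr_ge0 => x _; rewrite mulr_ge0 ?trans_ge0.
Qed.

Lemma walk_dist_reachable w (g : R) k y :
  walk_dist e w g k y != 0 -> exists2 n, (n <= k)%N & reachable_in e n w y.
Proof.
elim: k y => [|k IH] y /=.
  by case: (eqVneq y w) => [-> _|_]; [exists 0%N; last apply: reachable_in0 | rewrite eqxx].
move=> /eqP sum_neq0.
have [x /[!mulf_eq0] /norP [walk_x trans_xy]] : exists x, walk_dist e w g k x * trans e g x y != 0.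
  by apply/existsP; apply: contra_notT sum_neq0 => /existsPn h0; apply: big1 => x _; apply/eqP/negPn.
have [n le_nk reach_x] := IH x walk_x.
move: trans_xy; rewrite /trans; case: (eqVneq x y) => [<- _|_].
  by exists n => //; apply: leqW.
case: ifP => [exy _|_]; last by rewrite eqxx.
by exists n.+1 => //; apply: reachable_in_rcons exy.
Qed.

Lemma walk_support_gdist_le w (g : R) k y :
  walk_dist e w g k y != 0 -> (gdist e w y <= k)%N.
Proof.
by case/walk_dist_reachable=> n le_nk /gdist_le_reachable le_dn; apply: leq_trans le_dn le_nk.
Qed.

Hypothesis irr_e : irreflexive e.
Hypothesis deg_e_gt0 : forall x, (0 < deg e x)%N.

Lemma trans_sum (g : R) x : \sum_y trans e g x y = 1.
Proof.
rewrite (bigD1 x) //= /trans eqxx.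
rewrite (eq_bigr (fun y => if e x y then (1 - g) / (deg e x)%:R else 0)); last first.
  by move=> y neq_yx; rewrite eq_sym (negbTE neq_yx).
rewrite -big_mkcondr /= (eq_bigl (fun y => y \in [set z | e x z]%SET)); last first.
  by move=> y; rewrite !inE; case: eqP => [->|]; rewrite ?irr_e ?andbF.
rewrite sumr_const -/(deg e x) -[_ *+ _]mulr_natr divfK ?pnatr_eq0 -?lt0n //.
by rewrite addrC subrK.
Qed.

Lemma walk_dist_sum w (g : R) k : \sum_y walk_dist e w g k y = 1.
Proof.
elim: k => [|k IH] /=.
  by rewrite (bigD1 w) //= eqxx big1 ?addr0 // => y /negbTE ->.
rewrite exchange_big /= -[RHS]IH; apply: eq_bigr => x _.
by rewrite -mulr_sumr trans_sum mulr1.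
Qed.

End LazyWalk.

Section Transport.
Variables (T : finType) (e : rel T) (R : realType).
Implicit Types (mu nu : T -> R) (pi : T -> T -> R).

Lemma is_plan_prod mu nu :
  (forall a, 0 <= mu a) -> (forall b, 0 <= nu b) ->
  \sum_a mu a = 1 -> \sum_b nu b = 1 ->
  is_plan mu nu (fun a b => mu a * nu b).
Proof.
move=> mu_ge0 nu_ge0 mu1 nu1; split=> [a b|a|b]; first exact: mulr_ge0.
- by rewrite -mulr_sumr nu1 mulr1.
- by rewrite -mulr_suml mu1 mul1r.
Qed.

Lemma is_plan_support mu nu pi a b :
  is_plan mu nu pi -> pi a b != 0 -> mu a != 0 /\ nu b != 0.
Proof.
case=> pi_ge0 pi_mu pi_nu pi_neq0.
have pi_gt0 : 0 < pi a b by rewrite lt0r pi_neq0 pi_ge0.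
rewrite -pi_mu -pi_nu; split; [rewrite (bigD1 b) | rewrite (bigD1 a)] => //=;
  by rewrite gt_eqF // ltr_wpDr ?sumr_ge0.
Qed.

Lemma plan_cost_ge mu nu pi (c : R) :
  is_plan mu nu pi -> \sum_a mu a = 1 ->
  (forall a b, pi a b != 0 -> c <= (gdist e a b)%:R) -> c <= plan_cost e pi.
Proof.
case=> pi_ge0 pi_mu _ mu1 pi_far.
rewrite -[c]mulr1 -mu1 mulr_sumr; apply: ler_sum => a _.
rewrite -pi_mu mulr_sumr; apply: ler_sum => b _.
have [->|pi_neq0] := eqVneq (pi a b) 0; first by rewrite !mulr0.
by rewrite ler_wpM2r ?pi_far.
Qed.

Lemma wasserstein_ge mu nu (c : R) :
  (exists pi, is_plan mu nu pi) ->
  (forall pi, is_plan mu nu pi -> c <= plan_cost e pi) ->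
  c <= wasserstein e mu nu.
Proof.
move=> [pi plan_pi] cost_ge; apply: lb_le_inf; first by exists (plan_cost e pi), pi.
by move=> _ [pi' [plan_pi' ->]]; apply: cost_ge.
Qed.

End Transport.

Lemma W_ge_gdist (R : realType) (T : finType) (e : rel T) (u v : T)
    (alpha beta : R) (k : nat) :
  simple_graph e -> connected_graph e -> u != v ->
  0 <= alpha <= 1 -> 0 <= beta <= 1 ->
  (gdist e u v)%:R - 2 * k%:R <= W e u v alpha beta k.
Proof.
move=> [irr_e sym_e] conn_e neq_uv alpha01 beta01.
have deg_e_gt0 x : (0 < deg e x)%N.
  have [->|neq_xu] := eqVneq x u; first exact: (deg_gt0 conn_e neq_uv).
  exact: (deg_gt0 conn_e neq_xu).
apply: wasserstein_ge => [|pi plan_pi].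
  by eexists; apply: is_plan_prod; rewrite ?walk_dist_sum // => a; apply: walk_dist_ge0.
apply: (plan_cost_ge plan_pi) => [|a b]; first exact: walk_dist_sum.
move=> /(is_plan_support plan_pi) [/walk_support_gdist_le ua /walk_support_gdist_le vb].
have : (gdist e u v <= k + gdist e a b + k)%N.
  rewrite (leq_trans (gdist_triangle conn_e u b v)) // leq_add //.
    by rewrite (leq_trans (gdist_triangle conn_e u a b)) // leq_add2r.
  by rewrite gdist_sym.
by rewrite -(ler_nat R) !natrD; lra.
Qed.

Theorem lemma4p14 (R : realType) (T : finType) (e : rel T) (u v : T)
    (alpha beta : R) :
  simple_graph e -> connected_graph e ->
  0 <= alpha -> alpha <= beta -> beta <= 1 ->
  beta < 1 ->
  (fun k => W e u v alpha beta k) @ \oo --> (1 : R) ->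
  forall N : nat, (forall k : nat, (N <= k)%N -> W e u v alpha beta k = 1) ->
    (gdist e u v)%:R / 2 - 1 <= (N%:R : R).
Proof.
move=> simple_e conn_e alpha_ge0 le_alpha_beta beta_le1 _ _ N W1.
have [eq_uv|neq_uv] := eqVneq u v.
  by rewrite eq_uv gdist_refl mul0r sub0r (le_trans _ (ler0n _ _)) // lerN10.
have alpha01 : 0 <= alpha <= 1 by rewrite alpha_ge0 (le_trans le_alpha_beta).
have beta01 : 0 <= beta <= 1 by rewrite beta_le1 (le_trans alpha_ge0).
have := W_ge_gdist N simple_e conn_e neq_uv alpha01 beta01.
by rewrite W1 //; lra.
Qed.
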